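(* Let $p$ be a prime, $m$ a positive integer, $e=1$, and $b\ge2$ an integer with $b\leq p$. Then $d_b(\mathcal{C}_i)=i+b$ for each $0\leq i\leq p-b$.
   Context: For $0\le i\le p^e$, $\mathcal{C}_i$ denotes the cyclic code $\langle (x-1)^i\rangle\subseteq \mathbb{F}_{p^m}[x]/\langle x^{p^e}-1\rangle$, with polynomials identified with their coefficient vectors in $\mathbb{F}_{p^m}^{p^e}$. For $c\in\mathbb{F}_{p^m}^{n}$, $\pi_b(c)$ is the list of the $n$ cyclically consecutive $b$-tuples $(c_j,\dots,c_{j+b-1})$ (indices mod $n$), $d_b(c,c')=d_H(\pi_b(c),\pi_b(c'))$, and $d_b(\mathcal{C})$ is the minimum of $d_b(c,c')$ over distinct $c,c'\in\mathcal{C}$. *)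

From mathcomp Require Import all_boot all_order all_algebra all_field.
Set Implicit Arguments. Unset Strict Implicit. Unset Printing Implicit Defensive.
Import GRing.Theory.
Local Open Scope ring_scope.

Definition vpoly (F : fieldType) (n : nat) (c : 'rV[F]_n) : {poly F} :=
  \sum_(j < n) c 0 j *: 'X^j.

(* Membership in C_i = < (x-1)^i > inside F[x]/<x^n - 1> (n = p^e):
   the residue of c is g (x-1)^i mod x^n - 1 for some polynomial g. *)
Definition in_cyc_code (F : fieldType) (n i : nat) (c : 'rV[F]_n) : Prop :=
  exists g : {poly F}, vpoly c = (g * ('X - 1) ^+ i) %% ('X^n - 1).

Definition cidx (n : nat) (j : 'I_n) (k : nat) : 'I_n :=
  Ordinal (ltn_pmod (j + k) (leq_ltn_trans (leq0n j) (ltn_ord j))).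

Definition pib (F : fieldType) (n b : nat) (c : 'rV[F]_n) : 'I_n -> {ffun 'I_b -> F} :=
  fun j => [ffun k : 'I_b => c 0 (cidx j k)].

Definition hamming (T : eqType) (n : nat) (u v : 'I_n -> T) : nat :=
  #|[pred j : 'I_n | u j != v j]|.

Definition bdist (F : fieldType) (n b : nat) (c c' : 'rV[F]_n) : nat :=
  hamming (pib b c) (pib b c').

(* A nonzero polynomial f of degree < p divisible by (x - 1)^i has at least
   i + 1 nonzero coefficients: in characteristic p the operator
   f |-> x f' - (deg f) f kills the leading coefficient and no other one, and
   lowers the multiplicity of the root 1 by one.  The b-window support of a
   nonzero word of weight w has at least min(p, w + b - 1) elements, because a
   proper nonempty subset of Z/p is never invariant under rotation.  Hence
   d_b(C_i) >= i + b, and the codeword (x - 1)^i, supported on {0, ..., i},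
   attains the bound. *)
From mathcomp Require Import all_boot all_order all_algebra all_field.
From mathcomp Require Import ring zify.
Set Implicit Arguments. Unset Strict Implicit. Unset Printing Implicit Defensive.
Import GRing.Theory.
Local Open Scope ring_scope.

Section VectorPolynomial.
Variables (F : fieldType) (n : nat).
Implicit Types c d : 'rV[F]_n.

Lemma coef_vpoly c k : (vpoly c)`_k = \sum_(j < n) c 0 j * (k == j)%:R.
Proof. by rewrite /vpoly coef_sum; apply: eq_bigr => j _; rewrite coefZ coefXn. Qed.

Lemma coef_vpoly_ord c (j : 'I_n) : (vpoly c)`_j = c 0 j.
Proof.
rewrite coef_vpoly (bigD1 j) //= eqxx mulr1 big1 ?addr0 // => j' /negPf nej.
by rewrite eq_sym -[_ == _]/(j' == j) nej mulr0.
Qed.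

Lemma size_vpoly c : (size (vpoly c) <= n)%N.
Proof.
apply/leq_sizeP => k kn; rewrite coef_vpoly big1 // => j _.
by rewrite (gtn_eqF (leq_trans (ltn_ord j) kn)) mulr0.
Qed.

Lemma vpolyB c d : vpoly (c - d) = vpoly c - vpoly d.
Proof. by rewrite /vpoly -sumrB; apply: eq_bigr => j _; rewrite !mxE scalerBl. Qed.

Lemma vpoly_eq0 c : (vpoly c == 0) = (c == 0).
Proof.
apply/eqP/eqP => [c0|->]; last by rewrite /vpoly big1 // => j _; rewrite mxE scale0r.
by apply/rowP => j; rewrite -coef_vpoly_ord c0 coef0 mxE.
Qed.

Lemma vpoly_row (f : {poly F}) : (size f <= n)%N -> vpoly (\row_(j < n) f`_j) = f.
Proof.
move=> sf; apply/polyP => k; have [kn | nk] := ltnP k n.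
  by rewrite (coef_vpoly_ord _ (Ordinal kn)) mxE.
by rewrite !nth_default // (leq_trans _ nk) ?size_vpoly.
Qed.

End VectorPolynomial.

Lemma dvdp_cyc_code (F : fieldType) (n i : nat) (c : 'rV[F]_n) :
  ('X - 1 : {poly F}) ^+ i %| 'X^n - 1 -> in_cyc_code i c -> ('X - 1) ^+ i %| vpoly c.
Proof. by move=> dvd_i_n [g ->]; rewrite -(dvdp_mod _ dvd_i_n) dvdp_mull. Qed.

Lemma cyc_code0 (F : fieldType) (n i : nat) : in_cyc_code i (0 : 'rV[F]_n).
Proof. by exists 0; rewrite mul0r mod0p; apply/eqP; rewrite vpoly_eq0. Qed.

Section EulerOperator.
Variable F : fieldType.
Implicit Types f : {poly F}.

Definition euler_op (e : nat) f := 'X * f^`() - e%:R *: f.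

Lemma coef_euler_op e f j : (euler_op e f)`_j = (j%:R - e%:R) * f`_j.
Proof.
rewrite coefB coefZ coefXM mulrBl; case: j => [|j] /=; first by rewrite !mul0r.
by rewrite coef_deriv !mulr_natl.
Qed.

Lemma size_euler_op e f : (size (euler_op e f) <= size f)%N.
Proof. by apply/leq_sizeP => j sj; rewrite coef_euler_op nth_default ?mulr0. Qed.

Lemma dvdp_euler_op e i f :
  ('X - 1) ^+ i.+1 %| f -> ('X - 1) ^+ i %| euler_op e f.
Proof.
case/dvdpP => h ->; rewrite /euler_op derivM deriv_exp derivXsubC mul1r.
apply/dvdpP; exists ('X * (h^`() * ('X - 1) + h *+ i.+1) - e%:R *: (h * ('X - 1))).
by rewrite -!mul_polyC !exprS; ring.
Qed.

End EulerOperator.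

Section PositiveCharacteristic.
Variables (F : fieldType) (p : nat).
Hypothesis pcharFp : p \in [pchar F].

Lemma Xn_sub1_pchar : 'X^p - 1 = ('X - 1 : {poly F}) ^+ p.
Proof.
have pcharFXp : p \in [pchar {poly F}] by rewrite pchar_poly.
rewrite -[RHS]pFrobenius_autE pFrobenius_autB_comm; last exact: commr1.
by rewrite !pFrobenius_autE expr1n.
Qed.

Lemma dvdp_cyc_code_pchar (i : nat) (c : 'rV[F]_p) :
  (i <= p)%N -> in_cyc_code i c -> ('X - 1) ^+ i %| vpoly c.
Proof. by move=> ip; apply: dvdp_cyc_code; rewrite Xn_sub1_pchar dvdp_exp2l. Qed.

Lemma subr_natr_neq0 (j e : nat) : (j < e < p)%N -> j%:R - e%:R != 0 :> F.
Proof.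
case/andP=> je ep; rewrite -opprB oppr_eq0 -natrB ?(ltnW je) //.
by rewrite -(dvdn_pcharf pcharFp) gtnNdvd ?subn_gt0 // (leq_ltn_trans (leq_subr _ _)).
Qed.

Lemma euler_op_eq0 (f : {poly F}) : ((size f).-1 < p)%N ->
  euler_op (size f).-1 f = 0 -> f = lead_coef f *: 'X^((size f).-1).
Proof.
move=> ep Ef0; apply/polyP => j; rewrite coefZ coefXn.
case: ltngtP => [je | ej | ->]; last by rewrite mulr1 lead_coefE.
  apply/eqP; rewrite mulr0; have := coef_euler_op (size f).-1 f j.
  by rewrite Ef0 coef0 => /esym/eqP; rewrite mulf_eq0 (negPf (subr_natr_neq0 _)) ?je.
by rewrite mulr0 nth_default //; case: (size f) ej.
Qed.

Lemma weight_gt_mult1 (i : nat) (f : {poly F}) : f != 0 -> (size f <= p)%N ->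
  ('X - 1) ^+ i %| f -> (i < #|[set j : 'I_p | (f`_j != 0)%R]|)%N.
Proof.
elim: i f => [|i IH] f f0 sf dvd_f;
  have ep : ((size f).-1 < p)%N by rewrite prednK ?size_poly_gt0.
all: have lc_f : f`_(Ordinal ep) != 0 by rewrite /= -lead_coefE lead_coef_eq0.
  by rewrite card_gt0; apply/set0Pn; exists (Ordinal ep); rewrite inE.
set e := Ordinal ep; set g := euler_op e f.
have g0 : g != 0.
  apply/eqP=> /(euler_op_eq0 ep) Ef.
  have /rootP : root f 1.
    by rewrite -dvdp_XsubCl polyC1 (dvdp_trans _ dvd_f) // exprS dvdp_mulIl.
  by rewrite Ef hornerZ hornerXn expr1n mulr1 => /eqP; rewrite lead_coef_eq0 (negPf f0).
have supp_g : [set j : 'I_p | g`_j != 0] \subset [set j : 'I_p | f`_j != 0] :\ e.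
  apply/subsetP => j; rewrite !inE coef_euler_op mulf_eq0 negb_or subr_eq0.
  by case/andP=> ne_je ->; rewrite andbT; apply: contraNneq ne_je => ->.
have := IH g g0 (leq_trans (size_euler_op _ _) sf) (dvdp_euler_op _ dvd_f).
move/leq_trans/(_ (subset_leq_card supp_g)) => lt_i_supp.
by rewrite (cardsD1 e) inE lc_f.
Qed.

End PositiveCharacteristic.

Section CyclicWindows.
Variable n : nat.
Implicit Types (j : 'I_n) (S N : {set 'I_n}).

Lemma cidxA j a b : cidx (cidx j a) b = cidx j (a + b).
Proof. by apply: val_inj; rewrite /= modnDml addnA. Qed.

Lemma cidx0 j : cidx j 0 = j.
Proof. by apply: val_inj; rewrite /= addn0 modn_small. Qed.

Lemma cidx_onto j0 j : j = cidx j0 (j + n - j0).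
Proof.
apply: val_inj => /=; have := ltn_ord j0; have := ltn_ord j.
by move=> jn j0n; rewrite addnBA ?addKn ?modnDr ?modn_small // (leq_trans (ltnW j0n)) ?leq_addl.
Qed.

Lemma cidxn j : cidx j n = j.
Proof. by apply: val_inj; rewrite /= modnDr modn_small. Qed.

Definition rot1 j := cidx j 1.

Lemma rot1_inj : injective rot1.
Proof.
move=> j j' /(congr1 (fun k => cidx k n.-1)); rewrite /rot1 !cidxA add1n.
by rewrite prednK ?cidxn // (leq_ltn_trans _ (ltn_ord j)).
Qed.

Lemma card_rot1_preim_gt N :
  N != set0 -> N != setT -> (#|N| < #|N :|: rot1 @^-1: N|)%N.
Proof.
move=> N0 NT; rewrite ltnNge; apply: contra NT => le_card.
have eqNU : N :|: rot1 @^-1: N = N.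
  by apply/eqP; rewrite eq_sym eqEcard subsetUl le_card.
have rot1_closed : rot1 @^-1: N = N.
  apply/eqP; rewrite eqEcard (card_preimset _ rot1_inj) leqnn andbT.
  by rewrite -{2}eqNU subsetUr.
case/set0Pn: N0 => j0 j0N; apply/eqP/setP => j; rewrite inE (cidx_onto j0 j).
elim: (_ - _)%N => [|t IH]; first by rewrite cidx0.
by move: IH; rewrite -addn1 -cidxA -{1}rot1_closed inE.
Qed.

Definition window k S := [set j | [exists t : 'I_k, cidx j t \in S]].

Lemma window1 S : window 1 S = S.
Proof.
apply/setP => j; rewrite inE; apply/existsP/idP => [[t] | jS].
  by rewrite (ord1 t) cidx0.
by exists ord0; rewrite cidx0.
Qed.

Lemma windowSS k S : window k.+2 S = window k.+1 S :|: rot1 @^-1: window k.+1 S.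
Proof.
apply/setP => j; rewrite !inE; apply/existsP/orP => [[t] | [] /existsP[t]].
- case: (ltnP t k.+1) => [tk | kt] jtS.
    by left; apply/existsP; exists (Ordinal tk).
  right; apply/existsP; exists ord_max; rewrite /rot1 cidxA add1n /=.
  by have <- : nat_of_ord t = k.+1 by apply/eqP; rewrite eqn_leq kt -ltnS ltn_ord.
- by exists (widen_ord (leqnSn _) t).
- by rewrite /rot1 cidxA add1n; exists (lift ord0 t).
Qed.

Lemma card_window k S :
  S != set0 -> (minn n (#|S| + k) <= #|window k.+1 S|)%N.
Proof.
move=> S0; elim: k => [|k IH]; first by rewrite window1 addn0 geq_minr.
rewrite windowSS; have [-> | WT] := eqVneq (window k.+1 S) setT.
  by rewrite setTU cardsT card_ord geq_minl.
case/set0Pn: (S0) => j0 _; have n_gt0 := leq_ltn_trans (leq0n _) (ltn_ord j0).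
have S_gt0 : (0 < #|S|)%N by rewrite card_gt0.
have W0 : window k.+1 S != set0 by rewrite -card_gt0; lia.
have := card_rot1_preim_gt W0 WT; move: IH.
by set W := #|window k.+1 S|; set U := #|_ :|: _|; lia.
Qed.

Lemma window_sub_ends k a S : S \subset [set j : 'I_n | (j < a)%N] ->
  window k.+1 S \subset [set j : 'I_n | (j < a) || (n - k <= j)]%N.
Proof.
move=> Sa; apply/subsetP => j; rewrite !inE => /existsP[t /(subsetP Sa)].
rewrite inE /=; have := ltn_ord t; have := ltn_ord j.
case: (ltnP (j + t) n) => [jtn | njt] jn tk; last by lia.
by rewrite modn_small //; lia.
Qed.

Lemma card_ord_pred (P : pred nat) : #|[set j : 'I_n | P j]| = count P (iota 0 n).
Proof.
rewrite cardsE cardE /enum_mem size_filter -enumT -val_enum_ord count_map.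
exact: eq_count.
Qed.

Lemma card_ord_ends a k : (a + k <= n)%N ->
  (#|[set j : 'I_n | (j < a) || (n - k <= j)]| <= a + k)%N.
Proof.
move=> akn; rewrite (card_ord_pred (fun m => (m < a) || (n - k <= m))%N).
have -> : iota 0 n = iota 0 (n - k) ++ iota (n - k) k.
  by rewrite -iotaD subnK // (leq_trans (leq_addl a k)).
rewrite count_cat leq_add //.
  rewrite (@eq_in_count _ _ (fun m => m < 0 + a)%N) => [|m].
    by rewrite -size_filter filter_iota_ltn ?size_iota //; lia.
  by rewrite mem_iota add0n => /andP[_ mnk]; rewrite [(n - k <= m)%N]leqNgt mnk orbF.
by rewrite (leq_trans (count_size _ _)) ?size_iota.
Qed.

End CyclicWindows.

Lemma bdist_window (F : fieldType) (n b : nat) (c c' : 'rV[F]_n) :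
  bdist b c c' = #|window b [set j | c 0 j != c' 0 j]|.
Proof.
apply: eq_card => j; rewrite !inE /pib; under eq_existsb do rewrite inE.
rewrite -negb_forall; congr negb.
apply/eqP/forallP => [E t | E]; last by apply/ffunP => t; rewrite !ffunE; apply/eqP.
by have := congr1 (fun f : {ffun 'I_b -> F} => f t) E; rewrite !ffunE => ->.
Qed.

Lemma bdist_cyc_code_ge (F : fieldType) (p b i : nat) (c c' : 'rV[F]_p) :
  p \in [pchar F] -> (0 < b)%N -> (i + b <= p)%N ->
  in_cyc_code i c -> in_cyc_code i c' -> c <> c' -> (i + b <= bdist b c c')%N.
Proof.
move=> pcharFp b_gt0 ibp Cc Cc' /eqP; rewrite -subr_eq0 -vpoly_eq0 => d0.
have dvd_d : ('X - 1) ^+ i %| vpoly (c - c').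
  by rewrite vpolyB dvdp_sub ?(dvdp_cyc_code_pchar pcharFp) //; lia.
have supp_d : [set j | c 0 j != c' 0 j] = [set j : 'I_p | ((vpoly (c - c'))`_j != 0)%R].
  by apply/setP => j; rewrite !inE coef_vpoly_ord !mxE subr_eq0.
have := weight_gt_mult1 pcharFp d0 (size_vpoly _) dvd_d; rewrite -supp_d => wt.
have S0 : [set j | c 0 j != c' 0 j] != set0 by rewrite -card_gt0 (leq_ltn_trans _ wt).
have := card_window b.-1 S0; rewrite prednK // -bdist_window.
by move: wt; set w := #|_|; lia.
Qed.

Lemma exists_cyc_code_bdist_le (F : fieldType) (p b i : nat) :
  p \in [pchar F] -> (0 < b)%N -> (i + b <= p)%N ->
  exists c : 'rV[F]_p, [/\ in_cyc_code i c, c <> 0 & (bdist b c 0 <= i + b)%N].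
Proof.
move=> pcharFp b_gt0 ibp; set f := ('X - 1 : {poly F}) ^+ i.
have size_f : size f = i.+1 by rewrite /f -polyC1 size_exp_XsubC.
have vf : vpoly (\row_(j < p) f`_j) = f by apply: vpoly_row; rewrite size_f; lia.
exists (\row_(j < p) f`_j); split.
- by exists 1; rewrite mul1r vf modp_small // size_f size_XnsubC; lia.
- by apply/eqP; rewrite -vpoly_eq0 vf -size_poly_eq0 size_f.
have supp_f : [set j | (\row_(j < p) f`_j) 0 j != (0 : 'rV_p) 0 j] \subset
              [set j : 'I_p | (j < i.+1)%N].
  apply/subsetP => j; rewrite !inE !mxE; apply: contraR; rewrite -leqNgt => ij.
  by rewrite nth_default ?size_f.
rewrite bdist_window -(prednK b_gt0).
apply: leq_trans (subset_leq_card (window_sub_ends _ supp_f)) _.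
by rewrite -addSnnS card_ord_ends // addSnnS prednK.
Qed.

Theorem proposition2p7 (F : finFieldType) (p m b : nat) :
  prime p -> (0 < m)%N -> #|F| = (p ^ m)%N -> (2 <= b)%N -> (b <= p)%N ->
  forall i : nat, (i <= p - b)%N ->
    (exists c c' : 'rV[F]_(p ^ 1),
        [/\ in_cyc_code i c, in_cyc_code i c', c <> c' & bdist b c c' = (i + b)%N])
    /\ (forall c c' : 'rV[F]_(p ^ 1),
        in_cyc_code i c -> in_cyc_code i c' -> c <> c' -> (i + b <= bdist b c c')%N).
Proof.
move=> p_prime _ card_F b2 bp i ib; rewrite expn1.
have pcharFp : p \in [pchar F] by apply: card_finPcharP card_F p_prime.
have b_gt0 : (0 < b)%N by lia.
have ibp : (i + b <= p)%N by lia.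
split=> [|c c']; last exact: bdist_cyc_code_ge.
have [c [Cc c0 dc]] := exists_cyc_code_bdist_le pcharFp b_gt0 ibp.
have C0 := cyc_code0 F p i.
exists c, 0; split; [exact: Cc | exact: C0 | exact: c0 | apply/eqP].
by rewrite eqn_leq dc (bdist_cyc_code_ge pcharFp b_gt0 ibp Cc C0 c0).
Qed.
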